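(* Let $n\ge1$, $m\ge0$ and let $0$ be the all-zero vertex of the dYoke graph $Z_{n,m}$. Then $\operatorname{ecc}_{Z_{n,m}}(0)=\operatorname{ecc}_{Y_{n,m}}(0)$; explicitly: (1) if $n=1$, $\operatorname{ecc}_{Z_{n,m}}(0)=\binom{\lceil m/2\rceil+1}{2}+\binom{\lfloor m/2\rfloor+1}{2}$; (2) if $0\le m\le n$, $\operatorname{ecc}_{Z_{n,m}}(0)=\lfloor n(m+1)/2\rfloor$; (3) if $2\le n\le m$, with $d_0=\binom{\lfloor (m+n)/2\rfloor+1}{2}+\binom{\lceil (m-n)/2\rceil+1}{2}$: (a) if $2\mid(m-n)$ or $n\le\lceil (m+1)/2\rceil$, then $\operatorname{ecc}_{Z_{n,m}}(0)=d_0$; (b) otherwise $\operatorname{ecc}_{Z_{n,m}}(0)=d_0+n-\lceil (m+1)/2\rceil$.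
   Context: For integers $n\ge1$, $m\ge0$, the Yoke graph $Y_{n,m}$ has vertices the tuples $v=(v_0,\dots,v_{m+1})$ with $v_0,v_{m+1}\in\mathbb{Z}_n$, $v_1,\dots,v_m\in\{0,1\}$, $\sum v_i\equiv0\pmod n$; the dYoke graph $Z_{n,m}$ is defined identically but with $v_1,\dots,v_m\in\{-1,0,1\}$. In both, $u\sim v$ iff there is $0\le i\le m$ with $u_j=v_j$ for $j\notin\{i,i+1\}$ and either ($u_i=v_i+1$, $u_{i+1}=v_{i+1}-1$) or ($u_i=v_i-1$, $u_{i+1}=v_{i+1}+1$), bucket entries (indices $0,m+1$) computed modulo $n$. $\operatorname{ecc}_G(x)$ is the maximum distance from $x$ to a vertex of $G$. *)

From mathcomp Require Import all_boot all_order all_algebra.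
Unset Printing Implicit Defensive.
Import Order.TTheory GRing.Theory Num.Theory.
Local Open Scope ring_scope.

(* Bucket entries v_0, v_{m+1} represent
   elements of Z_n by their canonical representatives in [0,n). *)
Definition tup (m : nat) := {ffun 'I_(m.+2) -> int}.

Definition coord (m : nat) (v : tup m) (j : nat) : int := v (inord j).

Definition is_bucket (m j : nat) : bool := (j == 0)%N || (j == m.+1)%N.

(* lo = 0 gives the Yoke graph (middle entries in {0,1}),
   lo = -1 gives the dYoke graph (middle entries in {-1,0,1}). *)
Definition vert (lo : int) (n m : nat) (v : tup m) : Prop :=
  [/\ 0 <= coord m v 0 < n%:Z, 0 <= coord m v m.+1 < n%:Z,
      (forall j : nat, (1 <= j <= m)%N -> lo <= coord m v j <= 1)
    & (n%:Z %| \sum_(i < m.+2) v i)%Z].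

Definition entry_eq (n m j : nat) (a b : int) : Prop :=
  if is_bucket m j then (a = b %[mod n%:Z])%Z else a = b.

(* u ~ v : a unit moves between positions i and i+1 (0 <= i <= m) *)
Definition adj (n m : nat) (u v : tup m) : Prop :=
  exists i : nat, (i <= m)%N /\
    (forall j : nat, (j <= m.+1)%N -> j != i -> j != i.+1 ->
        coord m u j = coord m v j) /\
    ((entry_eq n m i (coord m u i) (coord m v i + 1) /\
      entry_eq n m i.+1 (coord m u i.+1) (coord m v i.+1 - 1)) \/
     (entry_eq n m i (coord m u i) (coord m v i - 1) /\
      entry_eq n m i.+1 (coord m u i.+1) (coord m v i.+1 + 1))).

Fixpoint walk {T : Type} (V : T -> Prop) (E : T -> T -> Prop)
    (k : nat) (x y : T) : Prop :=
  match k with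
  | 0 => x = y
  | k'.+1 => exists z, V z /\ E x z /\ walk V E k' z y
  end.

Definition ecc_is {T : Type} (V : T -> Prop) (E : T -> T -> Prop)
    (x : T) (d : nat) : Prop :=
  (forall y, V y -> exists k, (k <= d)%N /\ walk V E k x y) /\
  (exists y, V y /\ forall k, (k < d)%N -> ~ walk V E k x y).

Definition zero_vertex (m : nat) : tup m := [ffun => 0%R].

Definition eccY (n m : nat) (d : nat) : Prop :=
  ecc_is (vert 0 n m) (adj n m) (@zero_vertex m) d.
Definition eccZ (n m : nat) (d : nat) : Prop :=
  ecc_is (vert (-1) n m) (adj n m) (@zero_vertex m) d.

From Pilot Require Import Defs.
From mathcomp Require Import all_boot all_order all_algebra.
From mathcomp Require Import zify ring lra.
Import Order.TTheory GRing.Theory Num.Theory.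

(* Fix a vertex [v] and an integer lift [t] of its first bucket [v_0].  Along any walk
   from [0] to [v] the net number of units crossing the edge between positions [j] and
   [j+1] is [-(t + v_1 + ... + v_j)] for one such lift, so the walk has length at least
   [pot v t = sum_(j <= m) |t + v_1 + ... + v_j|].  Conversely, whenever [pot v t > 0]
   one unit can be moved back across an edge where this flow is extremal, keeping all
   entries in range and lowering the potential by one; hence [dist(0, v)] is the
   minimum of [pot v t] over the lifts [t], in the Yoke and in the dYoke graph alike.
   The eccentricity is the maximum over [v] of this minimum.  The partial sums form a
   1-Lipschitz sequence, which either meets the residue class of [v_0] in its middle
   part or stays there strictly between two consecutive lifts; either way some lift is
   close to it.  Explicit Yoke vertices show that the resulting bound is attained. *)

Set Implicit Arguments.
Unset Strict Implicit.

Local Open Scope ring_scope.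

(* [vector] also exports a [coord]. *)
Local Notation coord := Defs.coord.

(** * Integer sums *)

Definition pronic (x : nat) : nat := x * x.+1.

Lemma pronicS x : pronic x.+1 = (pronic x + 2 * x.+1)%N.
Proof. by rewrite /pronic; ring. Qed.

Lemma sum_subn_l (M K : nat) :
  2 * \sum_(j < M) (K - j)%N%:Z + (pronic (K - M))%:Z = (pronic K)%:Z.
Proof.
elim: M => [|M IH]; first by rewrite big_ord0 subn0; lia.
rewrite big_ord_recr /= mulrDr addrAC (canRL (addrK _) IH).
case: (leqP K M) => [leKM|ltMK].
  have -> : (K - M = 0)%N by lia.
  have -> : (K - M.+1 = 0)%N by lia.
  lia.
by rewrite (_ : K - M = (K - M.+1).+1)%N ?pronicS; lia.
Qed.

Lemma sum_subn_r (M S : nat) :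
  2 * \sum_(j < M) (j - S)%N%:Z = (pronic (M - S.+1))%:Z.
Proof.
elim: M => [|M IH]; first by rewrite big_ord0 sub0n mulr0.
rewrite big_ord_recr /= mulrDr IH.
case: (leqP M S) => [leMS|ltSM].
  have -> : (M - S = 0)%N by lia.
  have -> : (M - S.+1 = 0)%N by lia.
  have -> : (M.+1 - S.+1 = 0)%N by lia.
  lia.
by rewrite (_ : M.+1 - S.+1 = (M - S.+1).+1)%N ?pronicS; lia.
Qed.

Lemma sum_absz_sub (M K : nat) : (K < M)%N ->
  2 * \sum_(j < M) `|j%:Z - K%:Z| = (pronic K + pronic (M.-1 - K))%:Z.
Proof.
move=> ltKM; rewrite (eq_bigr (fun j : 'I_M => (K - j)%N%:Z + (j - K)%N%:Z)) => [|j _]; last lia.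
rewrite big_split mulrDr (canRL (addrK _) (sum_subn_l M K)) sum_subn_r.
have -> : (K - M = 0)%N by lia.
have -> : (M - K.+1 = M.-1 - K)%N by lia.
by rewrite (_ : pronic 0 = 0%N) // subr0 PoszD.
Qed.

Lemma pronic_sum_le (m b i : nat) : (b <= i <= m - b)%N ->
  (pronic i + pronic (m - i) <= pronic b + pronic (m - b))%N.
Proof.
move=> bnd; have [d eq_i] : exists d, i = (b + d)%N by exists (i - b)%N; lia.
have [e eq_m] : exists e, m = (b + d + e + b)%N by exists (m - b - d - b)%N; lia.
subst i m.
have -> : (b + d + e + b - (b + d) = e + b)%N by lia.
have -> : (b + d + e + b - b = b + d + e)%N by lia.
rewrite /pronic; nia.
Qed.

Lemma sum_sign (M k : nat) (c : int) :
  \sum_(j < M) (if (k <= j)%N then c else - c) = c * (M%:Z - 2 * (minn k M)%:Z).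
Proof.
elim: M => [|M IH]; first by rewrite big_ord0 minn0; lia.
rewrite big_ord_recr /= IH; case: (leqP k M) => lekM.
  by rewrite (minn_idPl (leqW lekM)) intS; ring.
by rewrite (minn_idPr lekM) intS; ring.
Qed.

(* [|j - u| >= |j - k| + (k - u) * (if p <= j then 1 else -1)] for [p] in [{k, k.+1}],
   and the signs add up to [M - 2 * p]. *)
Lemma sum_absz_sub_le (M k : nat) (u : int) :
  (u <= k%:Z /\ (2 * k < M)%N) \/ (k%:Z <= u /\ (M <= 2 * k + 1)%N) ->
  \sum_(j < M) `|j%:Z - k%:Z| <= \sum_(j < M) `|j%:Z - u|.
Proof.
have corr (p : nat) : p = k \/ p = k.+1 ->
    \sum_(j < M) `|j%:Z - k%:Z| + (k%:Z - u) * (M%:Z - 2 * (minn p M)%:Z)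
    <= \sum_(j < M) `|j%:Z - u|.
  move=> hp; rewrite -sum_sign -big_split /=.
  by apply: ler_sum => j _; case: ifP; case: hp => ->; lia.
case=> [[leuk ltkM]|[leku leM]].
  apply: le_trans (corr k (or_introl erefl)); rewrite lerDl.
  by apply: mulr_ge0; lia.
apply: le_trans (corr k.+1 (or_intror erefl)); rewrite lerDl.
by apply: mulr_le0; lia.
Qed.

Lemma pronic_le_sum_absz (M k : nat) (u : int) : (k < M)%N ->
  (u <= k%:Z /\ (2 * k < M)%N) \/ (k%:Z <= u /\ (M <= 2 * k + 1)%N) ->
  (pronic k + pronic (M.-1 - k))%:Z <= 2 * \sum_(j < M) `|j%:Z - u|.
Proof. by move=> ltkM hu; rewrite -sum_absz_sub // ler_pM2l //; exact: sum_absz_sub_le. Qed.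

Lemma sum_update (N i : nat) (f g : nat -> int) : (i < N)%N ->
  (forall j, (j < N)%N -> j != i -> g j = f j) ->
  \sum_(j < N) g j = \sum_(j < N) f j - f i + g i.
Proof.
move=> ltiN eqgf; rewrite (bigD1 (Ordinal ltiN)) // [in RHS](bigD1 (Ordinal ltiN)) //=.
rewrite (eq_bigr (fun j : 'I_N => f j)) => [|j /= nej]; first by ring.
by apply: eqgf => //; apply: contra nej => /eqP eqji; apply/eqP/val_inj.
Qed.

Lemma sum_indicator (N p : nat) (c : int) :
  \sum_(j < N) (if j == p :> nat then c else 0) = if (p < N)%N then c else 0.
Proof.
case: ifP => ltpN.
  rewrite (@sum_update _ p (fun _ => 0) (fun j => if j == p then c else 0)) //.
    by rewrite big1 // eqxx subrr add0r.
  by move=> j _ /negPf ->.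
rewrite big1 // => j _; case: eqP => // eqjp.
by move: ltpN; rewrite -eqjp ltn_ord.
Qed.

Lemma sum_indicator_gt (N k : nat) :
  \sum_(j < N) (if (k < j)%N then 1 else 0 : int) = (N - k.+1)%N%:Z.
Proof.
elim: N => [|N IH]; first by rewrite big_ord0.
by rewrite big_ord_recr /= IH; case: ltnP => ?; lia.
Qed.

Lemma sum_skip (h : int -> int) (z N : nat) : (0 < z <= N)%N ->
  \sum_(j < N.+1) h (j%:Z - (if (z <= j)%N then 1 else 0))
    = \sum_(j < N) h j%:Z + h (z%:Z - 1).
Proof.
elim: N => [|N IH] bnd; first lia.
rewrite big_ord_recr /= ifT; last lia.
have -> : N.+1%:Z - 1 = N%:Z by lia.
have [lezN|eqz] : (z <= N)%N \/ z = N.+1 by lia.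
  by rewrite IH ?big_ord_recr /=; [rewrite addrAC | lia].
rewrite eqz (_ : N.+1%:Z - 1 = N%:Z); last lia.
congr (_ + _); apply: eq_bigr => j _.
by rewrite ifF ?subr0 //; have := ltn_ord j; lia.
Qed.

Lemma exists_argmax (N : nat) (g : nat -> int) :
  exists2 i, (i <= N)%N & forall j, (j <= N)%N -> g j <= g i.
Proof.
case: (@arg_maxP _ _ 'I_N.+1 ord0 xpredT (fun j => g j)) => // i _ maxi.
by exists i => [|j lejN]; [rewrite -ltnS | exact: (maxi (@Ordinal N.+1 j lejN))].
Qed.

Lemma mulz_nat_le1 (x : int) (c : nat) : (1 < c)%N -> (x * c%:Z <= 1) = (x <= 0).
Proof. by move=> lt1c; apply/idP/idP => h; nia. Qed.

Lemma mulz_nat_ge1 (x : int) (c : nat) : (0 < c)%N -> (1 <= x * c%:Z) = (1 <= x).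
Proof. by move=> lt0c; rewrite -!gtz0_ge1 pmulr_lgt0 // ltz_nat. Qed.

Lemma dvdz_small (n : nat) (a : int) : 0 <= a < n%:Z -> (n%:Z %| a)%Z -> a = 0.
Proof. by move=> bnd /dvdz_mod0P; rewrite modz_small. Qed.

Lemma dvdz_cases (n : nat) (z : int) : (n%:Z %| z)%Z -> 0 <= z \/ z <= - n%:Z.
Proof.
case/dvdzP=> q ->; have [q_ge0|q_lt0] := lerP 0 q; first by left; apply: mulr_ge0.
by right; rewrite -mulN1r ler_wpM2r //; lia.
Qed.

Lemma coord_ord m (v : tup m) (k : 'I_m.+2) : coord m v k = v k.
Proof. by rewrite /Defs.coord inord_val. Qed.

Lemma coord_zero m j : coord m (zero_vertex m) j = 0.
Proof. by rewrite /Defs.coord ffunE. Qed.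

Lemma entry_eq_dvd n m j a b : entry_eq n m j a b ->
  (n%:Z %| a - b)%Z /\ (~~ is_bucket m j -> a = b).
Proof.
rewrite /entry_eq; case: ifP => _ eqab; last by rewrite eqab subrr dvdz0.
by rewrite -eqz_mod_dvd eqab.
Qed.

Lemma entry_eq_reduce (n m j : nat) (x : int) :
  entry_eq n m j (if is_bucket m j then (x %% n%:Z)%Z else x) x.
Proof. by rewrite /entry_eq; case: (is_bucket m j) => //; exact: modz_mod. Qed.

Lemma vert_widen (n m : nat) (lo lo' : int) (y : tup m) : lo' <= lo ->
  vert lo n m y -> vert lo' n m y.
Proof. by move=> le_lo [bnd0 bndm mid sum]; split=> // j /mid; lia. Qed.

Lemma walk_rcons {T : Type} (V : T -> Prop) (E : T -> T -> Prop) k x y z :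
  walk V E k x y -> V z -> E y z -> walk V E k.+1 x z.
Proof.
elim: k x => [|k IH] x /=; first by move=> -> Vz Eyz; exists z.
by case=> w [Vw [Exw walkwy]] Vz Eyz; exists w; split; last split; last exact: IH.
Qed.

(** * The potential of a vertex *)

Section Potential.

Variables n m : nat.
Implicit Types (u v w x y : tup m) (t : int).

Definition psum v (j : nat) : int := \sum_(i < j) coord m v i.+1.

Definition flow v t (j : nat) : int := t + psum v j.

Definition lifts v t : Prop := (n%:Z %| t - coord m v 0)%Z.

Definition pot v t : int := \sum_(j < m.+1) `|flow v t j|.

(* The last bucket is left unconstrained: it does not enter the potential. *)
Definition unit_move u w (i : nat) (s : int) : Prop :=
  [/\ (i <= m)%N,
      forall j, (j <= m.+1)%N -> j != i -> j != i.+1 -> coord m w j = coord m u j,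
      (0 < i)%N -> coord m w i = coord m u i - s,
      (i < m)%N -> coord m w i.+1 = coord m u i.+1 + s
    & i = 0%N -> (n%:Z %| coord m w 0 - (coord m u 0 - s))%Z].

Lemma psumS v j : psum v j.+1 = psum v j + coord m v j.+1.
Proof. by rewrite /psum big_ord_recr. Qed.

Lemma flowS v t j : flow v t j.+1 = flow v t j + coord m v j.+1.
Proof. by rewrite /flow psumS addrA. Qed.

Lemma pot_ge0 v t : 0 <= pot v t.
Proof. exact: sumr_ge0. Qed.

Lemma lifts_zero : lifts (zero_vertex m) 0.
Proof. by rewrite /lifts coord_zero subrr dvdz0. Qed.

Lemma pot_zero : pot (zero_vertex m) 0 = 0.
Proof.
rewrite /pot big1 // => j _.
by rewrite /flow /psum big1 ?normr0 // => i _; exact: coord_zero.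
Qed.

Lemma psum_unit_move u w i s : unit_move u w i s -> forall j, (j <= m)%N ->
  psum w j = psum u j - (if (0 < i <= j)%N then s else 0) + (if (i < j)%N then s else 0).
Proof.
case=> leim eqw eqi eqi1 _; elim=> [|j IH] lejm.
  by rewrite /psum !big_ord0 /=; case: ifP; lia.
rewrite !psumS IH; last by lia.
have [eqj1i|neji] := eqVneq j.+1 i.
  by subst i; rewrite eqi //; repeat case: ifP; lia.
have [eqji|neji1] := eqVneq j i.
  by subst i; rewrite eqi1; [repeat case: ifP; lia | lia].
have lej1m : (j.+1 <= m.+1)%N by lia.
by rewrite eqw ?eqSS //; repeat case: ifP; lia.
Qed.

(* A unit move changes a single flow, the one across the edge [(i, i.+1)], by [s]. *)
Lemma pot_unit_move u w i s t : unit_move u w i s -> lifts u t ->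
  let t' := t - (if i == 0%N then s else 0) in
  lifts w t' /\ pot w t' = pot u t - `|flow u t i| + `|flow u t i - s|.
Proof.
move=> mv liftu t'; have [leim eqw _ _ eq0] := mv.
have flow_move j : (j <= m)%N -> flow w t' j = flow u t j - (if j == i then s else 0).
  by move=> lejm; rewrite /flow /t' (psum_unit_move mv lejm); repeat case: ifP; lia.
split.
  rewrite /lifts /t'; have [i0|nei0] := eqVneq i 0%N.
    rewrite (_ : _ - _ = t - coord m u 0 - (coord m w 0 - (coord m u 0 - s))); last by ring.
    by rewrite rpredB // eq0.
  by rewrite subr0 eqw //; lia.
rewrite /pot (@sum_update _ i (fun j => `|flow u t j|) (fun j => `|flow w t' j|)) ?ltnS //.
  by rewrite flow_move // eqxx.
by move=> j ltjm /negPf neji; rewrite flow_move ?neji ?subr0.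
Qed.

Lemma adj_unit_move u w : adj n m u w -> exists i s, `|s| = 1 /\ unit_move u w i s.
Proof.
case=> i [leim [eqw mv]].
have move_by s : entry_eq n m i (coord m u i) (coord m w i + s) ->
    entry_eq n m i.+1 (coord m u i.+1) (coord m w i.+1 - s) -> unit_move u w i s.
  move=> /entry_eq_dvd [dvd_i eq_i] /entry_eq_dvd [_ eq_i1]; split=> //.
  - by move=> j lejm nji nji1; rewrite eqw.
  - by move=> lt0i; rewrite eq_i ?addrK // /is_bucket; lia.
  - by move=> ltim; rewrite eq_i1 ?subrK // /is_bucket; lia.
  by move=> i0; rewrite -i0 (_ : _ - _ = - (coord m u i - (coord m w i + s))) ?rpredN //; ring.
case: mv => [[eq_i eq_i1]|[eq_i eq_i1]].
  by exists i, 1; split; last exact: move_by.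
by exists i, (-1); split; last by apply: move_by; rewrite ?opprK.
Qed.

Lemma pot_adj_le u w t : adj n m u w -> lifts u t ->
  exists2 t', lifts w t' & pot w t' <= pot u t + 1.
Proof.
move=> /adj_unit_move [i [s [abs_s mv]]] liftu.
have [liftw pot_eq] := pot_unit_move mv liftu.
by exists (t - (if i == 0%N then s else 0)) => //; rewrite pot_eq; lia.
Qed.

Lemma pot_walk_le lo k x y t : walk (vert lo n m) (adj n m) k x y -> lifts x t ->
  exists2 t', lifts y t' & pot y t' <= pot x t + k%:Z.
Proof.
elim: k x t => [|k IH] x t /=; first by move=> -> lifty; exists t; rewrite ?addr0.
case=> z [_ [adjxz walkzy]] liftx.
have [t1 liftz le1] := pot_adj_le adjxz liftx.
have [t2 lifty le2] := IH z t1 walkzy liftz.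
by exists t2 => //; lia.
Qed.

Lemma pot_le_dist lo k y : walk (vert lo n m) (adj n m) k (zero_vertex m) y ->
  exists2 t, lifts y t & pot y t <= k%:Z.
Proof.
move=> walk0y; have [t lifty] := pot_walk_le walk0y lifts_zero.
by rewrite pot_zero add0r; exists t.
Qed.

End Potential.

(** * Descent of the potential *)

Section ShiftUnit.

Variables (n m : nat) (lo : int).
Implicit Types (v w : tup m) (t : int).

Definition shift_unit v (i : nat) (s : int) : tup m :=
  [ffun k : 'I_m.+2 =>
     let x := v k + (if k == i.+1 :> nat then s else 0) - (if k == i :> nat then s else 0) in
     if is_bucket m k then (x %% n%:Z)%Z else x].

Lemma coord_shift_unit v i s j : (j <= m.+1)%N ->
  coord m (shift_unit v i s) j =
    let x := coord m v j + (if j == i.+1 then s else 0) - (if j == i then s else 0) in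
    if is_bucket m j then (x %% n%:Z)%Z else x.
Proof. by move=> lejm; rewrite /Defs.coord ffunE inordK. Qed.

Lemma coord_shift_unit_other v i s j : vert lo n m v -> (j <= m.+1)%N ->
  j != i -> j != i.+1 -> coord m (shift_unit v i s) j = coord m v j.
Proof.
case=> bnd0 bndm _ _ lejm /negPf nji /negPf nji1.
rewrite coord_shift_unit //= nji nji1 addr0 subr0; case: ifP => // /orP[]/eqP ->.
  by rewrite modz_small.
by rewrite modz_small.
Qed.

Lemma unit_move_shift v i s : vert lo n m v -> (i <= m)%N ->
  unit_move n v (shift_unit v i s) i s.
Proof.
move=> vertv leim; split=> //.
- by move=> j; exact: coord_shift_unit_other.
- move=> lt0i; rewrite coord_shift_unit /=; last lia.
  have -> : (i == i.+1) = false by lia.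
  have -> : is_bucket m i = false by rewrite /is_bucket; lia.
  by rewrite eqxx addr0.
- move=> ltim; rewrite coord_shift_unit /=; last lia.
  have -> : (i.+1 == i) = false by lia.
  have -> : is_bucket m i.+1 = false by rewrite /is_bucket; lia.
  by rewrite eqxx subr0.
by move=> -> /=; rewrite coord_shift_unit //= addr0 -eqz_mod_dvd modz_mod.
Qed.

Lemma adj_shift_unit v i s : vert lo n m v -> (i <= m)%N -> `|s| = 1 ->
  adj n m (shift_unit v i s) v.
Proof.
move=> vertv leim abs_s; exists i; split=> //; split.
  by move=> j; exact: coord_shift_unit_other.
rewrite !coord_shift_unit /=; try lia.
have -> : (i == i.+1) = false by lia.
have -> : (i.+1 == i) = false by lia.
rewrite !eqxx !addr0.
have [s1|sN1] : s = 1 \/ s = -1 by lia.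
  by right; rewrite s1; split; exact: entry_eq_reduce.
by left; rewrite sN1 !opprK; split; exact: entry_eq_reduce.
Qed.

Lemma vert_shift_unit v i s : (0 < n)%N -> vert lo n m v -> (i <= m)%N ->
  ((0 < i)%N -> lo <= coord m v i - s <= 1) ->
  ((i < m)%N -> lo <= coord m v i.+1 + s <= 1) ->
  vert lo n m (shift_unit v i s).
Proof.
move=> n_gt0 vertv leim bnd_i bnd_i1; have [_ _ bnd sumv] := vertv.
have mod_bnd x : 0 <= (x %% n%:Z)%Z < n%:Z by rewrite modz_ge0 ?ltz_pmod //=; lia.
have [_ _ eq_i eq_i1 _] := unit_move_shift s vertv leim.
split.
- by rewrite coord_shift_unit //=; exact: mod_bnd.
- by rewrite coord_shift_unit //= /is_bucket eqxx orbT; exact: mod_bnd.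
- move=> j /andP[le1j lejm].
  have [eqji|nji] := eqVneq j i; first by subst j; rewrite eq_i //; exact: bnd_i.
  have [eqji1|nji1] := eqVneq j i.+1; first by subst j; rewrite eq_i1 //; exact: bnd_i1.
  by rewrite coord_shift_unit_other //; [apply: bnd | ]; lia.
set w := shift_unit v i s.
pose d (k : 'I_m.+2) : int :=
  (if k == i.+1 :> nat then s else 0) - (if k == i :> nat then s else 0).
have -> : \sum_(k < m.+2) w k = \sum_(k < m.+2) v k + \sum_(k < m.+2) d k
                                 + \sum_(k < m.+2) (w k - (v k + d k)).
  by rewrite -!big_split; apply: eq_bigr => k _ /=; ring.
have -> : \sum_(k < m.+2) d k = 0 by rewrite /d sumrB !sum_indicator !ifT ?subrr //; lia.
rewrite addr0 rpredD //; apply: rpred_sum => k _.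
rewrite /w /d ffunE /= addrA; case: ifP => _; last by rewrite subrr dvdz0.
by rewrite -eqz_mod_dvd modz_mod.
Qed.

End ShiftUnit.

(* [i] is the first maximum of [s * f] when the indices are scanned in direction [s];
   the scaling by [N + 2] lets the index break ties. *)
Lemma steepest_point (N : nat) (f : nat -> int) (lo s : int) : lo <= 0 -> `|s| = 1 ->
  (forall j, (j < N)%N -> lo <= f j.+1 - f j <= 1) ->
  (exists2 j0, (j0 <= N)%N & 0 < s * f j0) ->
  exists i, [/\ (i <= N)%N, 0 < s * f i,
                (0 < i)%N -> lo <= f i - f i.-1 - s <= 1
              & (i < N)%N -> lo <= f i.+1 - f i + s <= 1].
Proof.
move=> lo_le0 abs_s incr [j0 lej0N pos_j0].
have [i leiN maxi] := exists_argmax N (fun j => s * (f j * N.+2%:Z - j%:Z)).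
have c_gt1 : (1 < N.+2)%N by [].
have c_gt0 : (0 < N.+2)%N by [].
have s_pm1 : s = 1 \/ s = -1 by lia.
exists i; split=> // [|lt0i|ltiN].
- have := maxi j0 lej0N; have : N.+2%:Z <= s * f j0 * N.+2%:Z by apply: ler_peMl; lia.
  move=> le_j0 le_i; suff : 1 <= s * f i by lia.
  by rewrite -(mulz_nat_ge1 _ c_gt0); move: le_j0 le_i; case: s_pm1 => ->; lia.
- have le_i := maxi i.-1 (leq_trans (leq_pred i) leiN).
  have := incr i.-1; rewrite prednK // => /(_ leiN) bnd_i.
  case: s_pm1 => s_eq; rewrite s_eq in le_i *.
    have : 1 <= f i - f i.-1 by rewrite -(mulz_nat_ge1 _ c_gt0); lia.
    lia.
  have : f i - f i.-1 <= 0 by rewrite -(mulz_nat_le1 _ c_gt1); lia.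
  lia.
have le_i := maxi i.+1 ltiN; have bnd_i1 := incr i ltiN.
case: s_pm1 => s_eq; rewrite s_eq in le_i *.
  have : f i.+1 - f i <= 0 by rewrite -(mulz_nat_le1 _ c_gt1); lia.
  lia.
have : 1 <= f i.+1 - f i by rewrite -(mulz_nat_ge1 _ c_gt0); lia.
lia.
Qed.

Section Descent.

Variables (n m : nat) (lo : int).
Hypotheses (n_gt0 : (0 < n)%N) (lo_le0 : lo <= 0).
Implicit Types (v w : tup m) (t : int).

Lemma pot_descent v t : vert lo n m v -> lifts n v t -> 0 < pot v t ->
  exists w t', [/\ vert lo n m w, adj n m w v, lifts n w t' & pot w t' + 1 = pot v t].
Proof.
move=> vertv liftv pot_gt0; have [_ _ bnd _] := vertv.
have [j0 lej0m nz_j0] : exists2 j0, (j0 <= m)%N & flow v t j0 != 0.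
  case: (pickP (fun j : 'I_m.+1 => flow v t j != 0)) => [j nzj|all0].
    by exists j; rewrite // -ltnS.
  move: pot_gt0; rewrite /pot big1 ?ltxx // => j _.
  by move/negbFE/eqP: (all0 j) => ->.
have [s abs_s pos_j0] : exists2 s : int, `|s| = 1 & 0 < s * flow v t j0.
  by exists (if 0 < flow v t j0 then 1 else -1); case: ifP; lia.
have incr j : (j < m)%N -> lo <= flow v t j.+1 - flow v t j <= 1.
  by move=> ltjm; rewrite flowS addrC addKr; apply: bnd; lia.
have [i [leim pos_i bnd_i bnd_i1]] :=
  steepest_point lo_le0 abs_s incr (ex_intro2 _ _ j0 lej0m pos_j0).
have [liftw pot_w] := pot_unit_move (unit_move_shift s vertv leim) liftv.
exists (shift_unit n v i s), (t - (if i == 0%N then s else 0)); split=> //.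
- apply: vert_shift_unit => // [lt0i|ltim].
    by have := bnd_i lt0i; have := flowS v t i.-1; rewrite prednK //; lia.
  by have := bnd_i1 ltim; rewrite flowS; lia.
- exact: adj_shift_unit vertv leim abs_s.
have s_pm1 : s = 1 \/ s = -1 by lia.
by rewrite pot_w; move: pos_i; case: s_pm1 => ->; lia.
Qed.

Lemma pot_eq0 v t : vert lo n m v -> lifts n v t -> pot v t = 0 -> v = zero_vertex m.
Proof.
move=> [bnd0 bndm _ sumv] liftv pot0.
have flow0 j : (j <= m)%N -> flow v t j = 0.
  move=> lejm; apply/normr0_eq0.
  exact: (@psumr_eq0P _ _ (fun _ => true) (fun j : 'I_m.+1 => `|flow v t j|)
           (fun _ _ => normr_ge0 _) pot0 (@Ordinal m.+1 j lejm) isT).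
have t0 : t = 0 by have := flow0 0%N isT; rewrite /flow /psum big_ord0 addr0.
have low0 j : (j <= m)%N -> coord m v j = 0.
  case: j => [_|j lejm]; last by have := flowS v t j; rewrite !flow0 //; lia.
  apply: dvdz_small bnd0 _; rewrite -rpredN.
  by move: liftv; rewrite /lifts t0 sub0r.
have high0 : coord m v m.+1 = 0.
  apply: dvdz_small bndm _; move: sumv.
  rewrite (eq_bigr (fun k : 'I_m.+2 => coord m v k)) => [|k _]; last by rewrite coord_ord.
  by rewrite big_ord_recr /= big1 ?add0r // => k _; rewrite low0 // -ltnS.
apply/ffunP => k; rewrite ffunE -coord_ord.
by have := ltn_ord k; rewrite ltnS leq_eqVlt => /orP[/eqP->|/low0].
Qed.

Lemma walk_from_zero K v t : vert lo n m v -> lifts n v t -> pot v t <= K%:Z ->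
  exists k, (k <= K)%N /\ walk (vert lo n m) (adj n m) k (zero_vertex m) v.
Proof.
elim: K v t => [|K IH] v t vertv liftv potK.
  by exists 0%N; rewrite //= (pot_eq0 vertv liftv) //; apply/eqP; rewrite eq_le potK pot_ge0.
have [pot0|pot_gt0] : pot v t = 0 \/ 0 < pot v t by have := pot_ge0 v t; lia.
  by exists 0%N; rewrite //= (pot_eq0 vertv liftv).
have [w [t' [vertw adjwv liftw potw]]] := pot_descent vertv liftv pot_gt0.
have potwK : pot w t' <= K%:Z by lia.
have [k [leK walkw]] := IH w t' vertw liftw potwK.
by exists k.+1; split; last exact: walk_rcons walkw vertv adjwv.
Qed.

End Descent.

(** * Lifts close to a 1-Lipschitz sequence *)

Section LipschitzSequence.

Variables (n m : nat) (x : nat -> int).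
Hypothesis x_lip : forall j, (j < m)%N -> `|x j.+1 - x j| <= 1.

Definition dist_sum (t : int) : int := \sum_(j < m.+1) `|t - x j|.

Lemma lip_dist i j : (i <= j <= m)%N -> `|x j - x i| <= (j - i)%N%:Z.
Proof.
elim: j => [|j IH] /andP[leij lejm]; first by rewrite (_ : i = 0%N) ?subrr; lia.
have [->|neij] := eqVneq i j.+1; first by rewrite subrr subnn.
have leijm : (i <= j <= m)%N by lia.
by have := IH leijm; have := x_lip lejm; lia.
Qed.

Lemma dist_sum_at i : (i <= m)%N ->
  2 * dist_sum (x i) <= (pronic i + pronic (m - i))%:Z.
Proof.
move=> leim; rewrite -(@sum_absz_sub m.+1 i leim) ler_pM2l //.
apply: ler_sum => j _; have ltjm := ltn_ord j.
case: (leqP i j) => [leij|ltji].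
  by have := @lip_dist i j; lia.
by have := @lip_dist j i; lia.
Qed.

Hypothesis n_gt0 : (0 < n)%N.

(* A 1-Lipschitz sequence cannot jump over a member of the residue class of [r]. *)
Lemma avoiding_lift b r : (2 * b <= m)%N ->
  (forall j, (b <= j <= m - b)%N -> ~~ (n%:Z %| x j - r)%Z) ->
  exists2 t, (n%:Z %| t - r)%Z & forall j, (b <= j <= m - b)%N -> t < x j < t + n%:Z.
Proof.
move=> le2bm avoid; set t := x b - ((x b - r) %% n%:Z)%Z.
have dvd_t : (n%:Z %| t - r)%Z.
  apply/dvdzP; exists ((x b - r) %/ n%:Z)%Z.
  by have := divz_eq (x b - r) n%:Z; rewrite /t; lia.
exists t => // j /andP[lebj lejm].
suff inside_from_b d : (b + d <= m - b)%N -> t < x (b + d) < t + n%:Z.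
  by rewrite -(subnKC lebj); apply: inside_from_b; lia.
elim: d => [|d IH] le_bd.
  have nz : ((x b - r) %% n%:Z)%Z != 0.
    by apply: (contraNneq _ (avoid b _)) => [/dvdz_mod0P|]; last lia.
  have n_neq0 : n%:Z != 0 by lia.
  have n_pos : 0 < n%:Z by lia.
  have := modz_ge0 (x b - r) n_neq0; have := ltz_pmod (x b - r) n_pos.
  by rewrite addn0 /t; lia.
have le_bd' : (b + d <= m - b)%N by lia.
have /andP[lt_t lt_tn] := IH le_bd'; rewrite addnS.
have ne_t : x (b + d).+1 != t.
  by apply: (contraNneq _ (avoid (b + d).+1 _)) => [->|]; last lia.
have ne_tn : x (b + d).+1 != t + n%:Z.
  apply: (contraNneq _ (avoid (b + d).+1 _)) => [->|]; last lia.
  by rewrite addrAC rpredD // dvdzz.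
have lt_bdm : (b + d < m)%N by lia.
by have := x_lip lt_bdm; move: ne_t ne_tn => /eqP ne_t /eqP ne_tn; lia.
Qed.

(* Outside the middle range, [x j] is at distance at most [|j - b| - 1], resp.
   [|j - (m - b)| - 1], from the interval [[t, t + n]]. *)
Lemma dist_sum_two_lifts b t : (2 * b <= m)%N ->
  (forall j, (b <= j <= m - b)%N -> t < x j < t + n%:Z) ->
  dist_sum t + dist_sum (t + n%:Z) <= (m.+1 * n + 2 * pronic b.-1)%N%:Z.
Proof.
move=> le2bm inside.
have term j : (j <= m)%N -> `|t - x j| + `|t + n%:Z - x j|
    <= n%:Z + 2 * ((b.-1 - j)%N%:Z + (j - (m - b).+1)%N%:Z).
  move=> lejm; case: (ltnP j b) => [ltjb|lebj].
    by have := @lip_dist j b; have := inside b; lia.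
  case: (leqP j (m - b)) => [lejmb|ltmbj]; first by have := inside j; lia.
  by have := @lip_dist (m - b) j; have := inside (m - b)%N; lia.
rewrite /dist_sum -big_split /=.
apply: (@le_trans _ _ (\sum_(j < m.+1) (n%:Z + 2 * ((b.-1 - j)%N%:Z + (j - (m - b).+1)%N%:Z)))).
  by apply: ler_sum => j _; apply: term; rewrite -ltnS.
rewrite big_split /= sumr_const card_ord -mulr_sumr big_split /= mulrDr.
rewrite (canRL (addrK _) (sum_subn_l m.+1 b.-1)) sum_subn_r.
have -> : (b.-1 - m.+1 = 0)%N by lia.
have -> : (m.+1 - (m - b).+2 = b.-1)%N by lia.
lia.
Qed.

Lemma exists_lift_dist_sum_le b r : (2 * b <= m)%N -> exists2 t, (n%:Z %| t - r)%Z &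
  2 * dist_sum t <= (maxn (pronic b + pronic (m - b)) (m.+1 * n + 2 * pronic b.-1))%:Z.
Proof.
move=> le2bm.
case: (pickP (fun j : 'I_m.+1 => (b <= j <= m - b)%N && (n%:Z %| x j - r)%Z))
  => [j /andP[bnd dvd]|none].
  exists (x j) => //; apply: le_trans (dist_sum_at (ltn_ord j)) _.
  by have := pronic_sum_le bnd; lia.
have avoid j : (b <= j <= m - b)%N -> ~~ (n%:Z %| x j - r)%Z.
  move=> bnd; have ltjm : (j < m.+1)%N by lia.
  by move: (none (Ordinal ltjm)); rewrite /= bnd /= => ->.
have [t dvd_t inside] := avoiding_lift le2bm avoid.
have bnd2 : dist_sum t + dist_sum (t + n%:Z) <= (m.+1 * n + 2 * pronic b.-1)%N%:Z.
  exact: dist_sum_two_lifts le2bm inside.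
have le_max : (m.+1 * n + 2 * pronic b.-1 <= maxn (pronic b + pronic (m - b))
                                               (m.+1 * n + 2 * pronic b.-1))%N.
  by rewrite leq_max leqnn orbT.
case: (lerP (dist_sum t) (dist_sum (t + n%:Z))) => [le|lt].
  by exists t => //; lia.
by exists (t + n%:Z); [rewrite addrAC rpredD // dvdzz | lia].
Qed.

End LipschitzSequence.

(** * Extremal vertices *)

Section Extremal.

Variables n m : nat.
Hypothesis n_gt0 : (0 < n)%N.

Lemma exists_lift_pot_le lo (y : tup m) b : -1 <= lo -> vert lo n m y -> (2 * b <= m)%N ->
  exists2 t, lifts n y t &
    2 * pot y t <= (maxn (pronic b + pronic (m - b)) (m.+1 * n + 2 * pronic b.-1))%:Z.
Proof.
move=> lo_ge vert_y le2bm; have [_ _ bnd _] := vert_y.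
have lip j : (j < m)%N -> `|- psum y j.+1 - - psum y j| <= 1.
  by move=> ltjm; rewrite psumS; have := bnd j.+1; lia.
have [t dvd_t le_t] := exists_lift_dist_sum_le lip n_gt0 (coord m y 0) le2bm.
exists t => //; rewrite (_ : pot y t = dist_sum m (fun j => - psum y j) t) //.
by apply: eq_bigr => j _; rewrite /flow opprK.
Qed.

Definition mk_vertex (a : int) (g : nat -> int) : tup m :=
  [ffun k : 'I_m.+2 => if k == 0%N :> nat then a
     else if k == m.+1 :> nat then ((- (a + \sum_(i < m) g i.+1)) %% n%:Z)%Z else g k].

Lemma coord_mk_vertex a g j : (j <= m.+1)%N -> coord m (mk_vertex a g) j =
  if j == 0%N then a else if j == m.+1 then ((- (a + \sum_(i < m) g i.+1)) %% n%:Z)%Z else g j.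
Proof. by move=> lejm; rewrite /Defs.coord ffunE inordK. Qed.

Lemma vert_mk_vertex a g : 0 <= a < n%:Z -> (forall j, (0 < j <= m)%N -> 0 <= g j <= 1) ->
  vert 0 n m (mk_vertex a g).
Proof.
move=> bnd_a bnd_g; split.
- by rewrite coord_mk_vertex.
- by rewrite coord_mk_vertex //= eqxx modz_ge0 ?ltz_pmod //; lia.
- move=> j bnd_j; rewrite coord_mk_vertex; last lia.
  have -> : (j == 0%N) = false by lia.
  have -> : (j == m.+1) = false by lia.
  exact: bnd_g.
rewrite (eq_bigr (fun k : 'I_m.+2 => coord m (mk_vertex a g) k)) => [|k _]; last first.
  by rewrite coord_ord.
rewrite big_ord_recr big_ord_recl /= !coord_mk_vertex //=.
rewrite (eq_bigr (fun i : 'I_m => g i.+1)) => [|i _]; last first.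
  have ltim := ltn_ord i; rewrite /bump leq0n add1n coord_mk_vertex /=; last lia.
  by have -> : (i.+1 == m.+1) = false by lia.
rewrite eqxx; set x := - (a + _).
rewrite (_ : _ + _ = (x %% n%:Z)%Z - x); last by rewrite /x; ring.
by rewrite -eqz_mod_dvd modz_mod.
Qed.

Lemma lifts_mk_vertex a g t : lifts n (mk_vertex a g) t = (n%:Z %| t - a)%Z.
Proof. by rewrite /lifts coord_mk_vertex. Qed.

Lemma flow_mk_vertex a g t j : (j <= m)%N ->
  flow (mk_vertex a g) t j = t + \sum_(i < j) g i.+1.
Proof.
move=> lejm; congr (_ + _); apply: eq_bigr => i _.
have ltij := ltn_ord i; rewrite coord_mk_vertex /=; last lia.
by have -> : (i.+1 == m.+1) = false by lia.
Qed.

Lemma dvdz_sub_modz c t : (n%:Z %| t - (c %% n%:Z)%Z)%Z -> (n%:Z %| t - c)%Z.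
Proof.
rewrite (_ : t - c = t - (c %% n%:Z)%Z + ((c %% n%:Z)%Z - c)); last by ring.
by move=> dvd; rewrite rpredD // -eqz_mod_dvd modz_mod.
Qed.

Lemma spread_witness b : (2 * b <= m)%N -> (m - 2 * b <= n)%N ->
  exists2 y, vert 0 n m y &
    forall t, lifts n y t -> (pronic b + pronic (m - b))%:Z <= 2 * pot y t.
Proof.
move=> le2bm gap; pose y := mk_vertex ((- b%:Z) %% n%:Z)%Z (fun _ => 1).
exists y; first by apply: vert_mk_vertex => [|j _]; rewrite ?modz_ge0 ?ltz_pmod //; lia.
move=> t; rewrite lifts_mk_vertex => /dvdz_sub_modz; rewrite opprK => /dvdz_cases tb_cases.
have -> : pot y t = \sum_(j < m.+1) `|j%:Z - - t|.
  apply: eq_bigr => j _; rewrite flow_mk_vertex; last by rewrite -ltnS.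
  by rewrite sumr_const card_ord -[_ *+ _]mulr_natr mul1r; lia.
case: tb_cases => [tb_ge0|tb_le].
  by apply: (@pronic_le_sum_absz m.+1 b (- t)); [lia | left; split; lia].
rewrite addnC -{2}(subKn (_ : b <= m)%N); last lia.
by apply: (@pronic_le_sum_absz m.+1 (m - b) (- t)); [lia | right; split; lia].
Qed.

(* The flows are [t] or [t + 1] with [t = n./2 (mod n)]; the unit at [p] is placed so
   that both [t >= n./2] and [t <= n./2 - n] give a potential [>= (n * m.+1)./2]. *)
Lemma split_witness : exists2 y, vert 0 n m y &
  forall t, lifts n y t -> ((n * m.+1)./2)%:Z <= pot y t.
Proof.
have half_n : (n * m.+1)./2 = (m.+1 * n./2 + (odd n * m.+1)./2)%N.
  have [k [-> | ->]] : exists k, n = (2 * k)%N \/ n = (2 * k + 1)%N by exists n./2; lia.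
    by rewrite oddM /=; nia.
  by rewrite oddD oddM /=; nia.
have le_e : ((odd n * m.+1)./2 <= m)%N by case: (odd n); lia.
pose p := (m.+1 - (odd n * m.+1)./2)%N.
pose ind j : int := if (p.-1 < j)%N then 1 else 0.
pose y := mk_vertex (n./2)%:Z (fun j => if j == p then 1 else 0).
exists y; first by apply: vert_mk_vertex => [|j _]; [| case: ifP]; lia.
move=> t; rewrite lifts_mk_vertex => /dvdz_cases t_cases.
have -> : pot y t = \sum_(j < m.+1) `|t + ind j|.
  apply: eq_bigr => j _; rewrite flow_mk_vertex; last by rewrite -ltnS.
  rewrite (eq_bigr (fun i : 'I_j => if i == p.-1 :> nat then 1 else 0)) ?sum_indicator //.
  by move=> i _; rewrite (_ : (i.+1 == p) = (i == p.-1 :> nat)) //; lia.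
have sum_lin : \sum_(j < m.+1) (t + ind j) = t * m.+1%:Z + ((odd n * m.+1)./2)%:Z.
  rewrite big_split /= sumr_const card_ord sum_indicator_gt -mulr_natr.
  by congr (_ + _); lia.
case: t_cases => [ta_ge0|ta_le].
  have : (n./2 * m.+1)%:Z <= t * m.+1%:Z by rewrite PoszM ler_wpM2r //; lia.
  have : \sum_(j < m.+1) (t + ind j) <= \sum_(j < m.+1) `|t + ind j|.
    by apply: ler_sum => j _; exact: ler_norm.
  by rewrite sum_lin; lia.
have : t * m.+1%:Z <= (n./2%:Z - n%:Z) * m.+1%:Z by rewrite ler_wpM2r //; lia.
have : \sum_(j < m.+1) - (t + ind j) <= \sum_(j < m.+1) `|t + ind j|.
  by apply: ler_sum => j _; rewrite -normrN; exact: ler_norm.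
by rewrite sumrN sum_lin; nia.
Qed.

(* All middle entries are [1] except for a hole at [z]: the flows are those of the
   spread vertex with [m - 1] middle entries, plus the repeated value at the hole. *)
Lemma gap_witness k : (2 <= n)%N -> m = (n + 2 * k + 1)%N ->
  exists2 y, vert 0 n m y & forall t, lifts n y t ->
    (pronic k + pronic (n + k) + 2 * n./2)%:Z <= 2 * pot y t.
Proof.
move=> n_ge2 eq_m; have uphalf_n := uphalf_half n.
pose z := (k + 1 + uphalf n)%N.
have bnd_z : (0 < z <= m)%N by rewrite /z; lia.
pose y := mk_vertex ((- k%:Z) %% n%:Z)%Z (fun j => if j == z then 0 else 1).
exists y.
  by apply: vert_mk_vertex => [|j _]; [rewrite modz_ge0 ?ltz_pmod | case: ifP]; lia.
move=> t; rewrite lifts_mk_vertex => /dvdz_sub_modz; rewrite opprK => /dvdz_cases tk_cases.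
have -> : pot y t = \sum_(j < m) `|j%:Z - - t| + `|(z%:Z - 1) - - t|.
  rewrite -(sum_skip (fun x => `|x - - t|) bnd_z); apply: eq_bigr => j _.
  rewrite flow_mk_vertex; last by rewrite -ltnS.
  rewrite (eq_bigr (fun i : 'I_j => 1 - if i == z.-1 :> nat then 1 else 0)); last first.
    by move=> i _; case: ifP; case: ifP; lia.
  by rewrite sumrB sumr_const card_ord sum_indicator; case: ifP; case: ifP; lia.
case: tk_cases => [tk_ge0|tk_le].
  have : (pronic k + pronic (n + k))%:Z <= 2 * \sum_(j < m) `|j%:Z - - t|.
    rewrite (_ : (n + k = m.-1 - k)%N); last lia.
    by apply: pronic_le_sum_absz; [lia | left; split; lia].
  lia.
have : (pronic (n + k) + pronic k)%:Z <= 2 * \sum_(j < m) `|j%:Z - - t|.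
  rewrite {2}(_ : (k = m.-1 - (n + k))%N); last lia.
  by apply: pronic_le_sum_absz; [lia | right; split; lia].
lia.
Qed.

End Extremal.

(** * The eccentricity *)

Definition ecc_value (n m : nat) : nat :=
  (if m <= n then (n * m.+1)./2
   else let d0 := 'C((m + n)./2 + 1, 2) + 'C(uphalf (m - n) + 1, 2) in
        if (2 %| m - n) || (n <= uphalf m.+1) then d0 else d0 + n - uphalf m.+1)%N.

(* The optimal choice of [b] in [exists_lift_pot_le]. *)
Definition window_margin (n m : nat) : nat := if (m <= n)%N then 0 else uphalf (m - n).

Lemma bin2_pronic x : ('C(x + 1, 2) * 2 = pronic x)%N.
Proof. by rewrite addn1 /pronic; elim: x => // x IH; rewrite binS bin1 mulnDl IH; nia. Qed.

Lemma parity_cases (x : nat) : exists k, x = (2 * k)%N \/ x = (2 * k + 1)%N.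
Proof. by exists x./2; lia. Qed.

Section EccValue.
Local Open Scope nat_scope.

Variables n m : nat.

Lemma ecc_value_small : m <= n -> ecc_value n m = (n * m.+1)./2.
Proof. by rewrite /ecc_value => ->. Qed.

Lemma ecc_value_large : n <= m ->
  ecc_value n m = (let d0 := 'C((m + n)./2 + 1, 2) + 'C(uphalf (m - n) + 1, 2) in
                   if (2 %| m - n) || (n <= uphalf m.+1) then d0 else d0 + n - uphalf m.+1).
Proof.
rewrite /ecc_value leq_eqVlt => /orP[/eqP eq_nm|ltnm]; last by rewrite leqNgt ltnm.
rewrite -eq_nm leqnn subnn dvdn0 /=.
have := bin2_pronic n; rewrite /pronic addn0.
have -> : (n + n)./2 = n by lia.
lia.
Qed.

Lemma ecc_value_one : ecc_value 1 m = 'C(uphalf m + 1, 2) + 'C(m./2 + 1, 2).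
Proof.
rewrite /ecc_value; case: (leqP m 1) => [lem1|lt1m].
  by case: m lem1 => [|[|]].
rewrite ifT; last by apply/orP; right; lia.
have -> : (m + 1)./2 = uphalf m by lia.
by have -> : uphalf (m - 1) = m./2 by lia.
Qed.

Lemma ecc_value_ub (b := window_margin n m) :
  maxn (pronic b + pronic (m - b)) (m.+1 * n + 2 * pronic b.-1) <= 2 * ecc_value n m + 1.
Proof.
rewrite /b /window_margin /ecc_value; case: (leqP m n) => [lemn|ltnm].
  have : m * m.+1 <= n * m.+1 by rewrite leq_mul2r lemn orbT.
  by rewrite /pronic subn0; lia.
have [k [eq_mn|eq_mn]] := parity_cases (m - n).
  have -> : 2 %| m - n by rewrite eq_mn dvdn_mulr.
  have [-> ->] : uphalf (m - n) = k /\ (m + n)./2 = n + k by lia.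
  have -> : m - k = n + k by lia.
  have := bin2_pronic (n + k); have := bin2_pronic k; rewrite /= /pronic.
  have -> : m = n + 2 * k by lia.
  by case: k {eq_mn} => [|k] /=; lia.
have -> : (2 %| m - n) = false by rewrite eq_mn; lia.
have [-> -> ->] :
    [/\ uphalf (m - n) = k.+1, (m + n)./2 = n + k & uphalf m.+1 = k + 1 + uphalf n].
  by split; lia.
have -> : m - k.+1 = n + k by lia.
have := bin2_pronic (n + k); have := bin2_pronic k.+1; rewrite /pronic.
have -> : m = n + 2 * k + 1 by lia.
by have := uphalf_half n; have := odd_double_half n; rewrite /=; case: ifP => cond; lia.
Qed.

Lemma ecc_value_spread : n < m -> (2 %| m - n) || (n <= uphalf m.+1) ->
  2 * ecc_value n m = pronic (uphalf (m - n)) + pronic (m - uphalf (m - n)).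
Proof.
move=> ltnm cond; rewrite /ecc_value leqNgt ltnm /= cond.
have := bin2_pronic ((m + n)./2); have := bin2_pronic (uphalf (m - n)).
have -> : (m + n)./2 = m - uphalf (m - n) by lia.
lia.
Qed.

Lemma ecc_value_gap : n < m -> ~~ ((2 %| m - n) || (n <= uphalf m.+1)) ->
  exists k, [/\ m = n + 2 * k + 1, 2 <= n &
                2 * ecc_value n m = pronic k + pronic (n + k) + 2 * n./2].
Proof.
move=> ltnm cond; rewrite /ecc_value (leqNgt m n) ltnm /= (negPf cond).
have [k [eq_mn|eq_mn]] := parity_cases (m - n).
  by move: cond; rewrite eq_mn dvdn_mulr.
have [-> ->] : uphalf (m - n) = k.+1 /\ (m + n)./2 = n + k by lia.
have := bin2_pronic (n + k); have := bin2_pronic k.+1.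
have := uphalf_half n; have := odd_double_half n.
have : uphalf m.+1 < n by move: cond; rewrite negb_or ltnNge => /andP[].
by rewrite /pronic; exists k; split; lia.
Qed.

End EccValue.

Section Eccentricity.

Variables (n m : nat) (lo : int).
Hypotheses (n_gt0 : (0 < n)%N) (lo_ge : -1 <= lo) (lo_le0 : lo <= 0).

Lemma pot_le_ecc_value y : vert lo n m y ->
  exists2 t, lifts n y t & pot y t <= (ecc_value n m)%:Z.
Proof.
move=> vert_y; have le2bm : (2 * window_margin n m <= m)%N.
  by rewrite /window_margin; case: ifP; lia.
have [t lift_t pot_t] := exists_lift_pot_le n_gt0 lo_ge vert_y le2bm.
by exists t => //; have := ecc_value_ub n m; lia.
Qed.

Lemma exists_far_vertex : exists2 y, vert 0 n m y &
  forall t, lifts n y t -> (ecc_value n m)%:Z <= pot y t.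
Proof.
case: (leqP m n) => [lemn|ltnm].
  by rewrite ecc_value_small //; exact: split_witness.
case: (boolP ((2 %| m - n) || (n <= uphalf m.+1)))%N => cond.
  have le2bm : (2 * uphalf (m - n) <= m)%N by lia.
  have gap : (m - 2 * uphalf (m - n) <= n)%N by lia.
  have [y vert_y pot_y] := spread_witness n_gt0 le2bm gap.
  by exists y => // t /pot_y; have := ecc_value_spread ltnm cond; lia.
have [k [eq_m n_ge2 val]] := ecc_value_gap ltnm cond.
have [y vert_y pot_y] := gap_witness n_gt0 n_ge2 eq_m.
by exists y => // t /pot_y; lia.
Qed.

Lemma ecc_is_value : ecc_is (vert lo n m) (adj n m) (zero_vertex m) (ecc_value n m).
Proof.
split=> [y vert_y|].
  have [t lift_t pot_t] := pot_le_ecc_value vert_y.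
  exact: (walk_from_zero n_gt0 lo_le0 vert_y lift_t pot_t).
have [y vert_y far_y] := exists_far_vertex.
exists y; split=> [|k ltk /pot_le_dist [t lift_t pot_t]]; first exact: vert_widen vert_y.
by have := far_y t lift_t; lia.
Qed.

End Eccentricity.

Lemma ecc_is_unique {T : Type} (V : T -> Prop) (E : T -> T -> Prop) x d1 d2 :
  ecc_is V E x d1 -> ecc_is V E x d2 -> d1 = d2.
Proof.
move=> [reach1 [y1 [Vy1 far1]]] [reach2 [y2 [Vy2 far2]]].
have [k1 [le1 walk1]] := reach1 y2 Vy2; have [k2 [le2 walk2]] := reach2 y1 Vy1.
apply/eqP; rewrite eqn_leq; apply/andP; split; rewrite leqNgt; apply/negP => lt.
  by apply: (far1 k2) walk2; lia.
by apply: (far2 k1) walk1; lia.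
Qed.

Unset Implicit Arguments.
Local Close Scope ring_scope.

Theorem theorem5p55 (n m : nat) (hn : (1 <= n)%N) :
  (forall d : nat, eccZ n m d <-> eccY n m d) /\
  (n = 1%N -> eccZ n m ('C(uphalf m + 1, 2) + 'C(m./2 + 1, 2))) /\
  ((m <= n)%N -> eccZ n m ((n * (m + 1))./2)) /\
  ((2 <= n)%N -> (n <= m)%N ->
     let d0 := ('C((m + n)./2 + 1, 2) + 'C(uphalf (m - n) + 1, 2))%N in
     (((2 %| m - n) || (n <= uphalf m.+1)) -> eccZ n m d0) /\
     (~~ ((2 %| m - n) || (n <= uphalf m.+1)) ->
        eccZ n m (d0 + n - uphalf m.+1))).
Proof.
have eccZ_value : eccZ n m (ecc_value n m) by apply: ecc_is_value.
have eccY_value : eccY n m (ecc_value n m) by apply: ecc_is_value.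
split=> [d|].
  split=> ecc_d; first by rewrite (ecc_is_unique ecc_d eccZ_value).
  by rewrite (ecc_is_unique ecc_d eccY_value).
split=> [n1|]; first by rewrite -ecc_value_one -n1.
split=> [lemn|le2n lenm]; first by rewrite addn1 -ecc_value_small.
by move: eccZ_value; rewrite ecc_value_large //=; case: ifP.
Qed.
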